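(* For any two different words $x,y$ over a finite alphabet $\Sigma$, there is a 2-state MCQFA (with complex amplitudes) that separates $x$ and $y$ in nondeterministic mode.
   Context: A 2-state Moore–Crutchfield quantum finite automaton (MCQFA) over $\Sigma$ consists of a unitary $U_\sigma\in\mathbb{C}^{2\times 2}$ for each $\sigma\in\Sigma$, an initial unit vector $|u_0\rangle\in\mathbb{C}^2$ and a set of accepting basis states; on input $w=w_1\cdots w_k$ the final state is $U_{w_k}\cdots U_{w_1}|u_0\rangle$ and the acceptance probability is the sum of the squared moduli of its accepting coordinates. The automaton separates $x$ and $y$ in nondeterministic mode if one of them is accepted with nonzero probability and the other with probability $0$. *)

(* Complex amplitudes are modelled by an arbitrary
   numClosedFieldType C (algebraically closed field with conjugation and
   norm, e.g. algC). *)
From HB Require Import structures.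
From mathcomp Require Import all_boot all_order all_algebra.
Set Implicit Arguments. Unset Strict Implicit. Unset Printing Implicit Defensive.
Import Order.TTheory GRing.Theory Num.Theory.
Local Open Scope ring_scope.

Definition adjmx (C : numClosedFieldType) (m n : nat) (A : 'M[C]_(m, n)) : 'M[C]_(n, m) :=
  \matrix_(i < n, j < m) (A j i)^*.

Definition unitary2 (C : numClosedFieldType) (U : 'M[C]_2) : Prop :=
  U *m adjmx U = 1%:M /\ adjmx U *m U = 1%:M.

Definition unit_vec2 (C : numClosedFieldType) (u : 'cV[C]_2) : Prop :=
  \sum_(i < 2) `|u i 0| ^+ 2 = 1.

Record MCQFA2 (C : numClosedFieldType) (Sigma : finType) := {
  trans : Sigma -> 'M[C]_2;
  init : 'cV[C]_2;
  acc : {set 'I_2} }.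

Definition wf_MCQFA2 (C : numClosedFieldType) (Sigma : finType) (M : MCQFA2 C Sigma) : Prop :=
  (forall s, unitary2 (trans M s)) /\ unit_vec2 (init M).

Definition final_state (C : numClosedFieldType) (Sigma : finType) (M : MCQFA2 C Sigma)
  (w : seq Sigma) : 'cV[C]_2 :=
  foldl (fun v s => trans M s *m v) (init M) w.

Definition acc_prob (C : numClosedFieldType) (Sigma : finType) (M : MCQFA2 C Sigma)
  (w : seq Sigma) : C :=
  \sum_(i in acc M) `|final_state M w i 0| ^+ 2.

Definition separates_nd (C : numClosedFieldType) (Sigma : finType) (M : MCQFA2 C Sigma)
  (x y : seq Sigma) : Prop :=
  (acc_prob M x != 0 /\ acc_prob M y = 0) \/ (acc_prob M x = 0 /\ acc_prob M y != 0).

From HB Require Import structures.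
From mathcomp Require Import all_boot all_order all_algebra.
From mathcomp Require Import ring.
Set Implicit Arguments. Unset Strict Implicit. Unset Printing Implicit Defensive.
Import Order.TTheory GRing.Theory Num.Theory.
Local Open Scope ring_scope.

(* Let a <> b be the letters at which x and y first differ (or let a be the
   first letter of the longer word when one is a prefix of the other).  Let a
   act by the rotation 1/5 [[3, 4i], [4i, 3]], b by 1/5 [[3, -4], [4, 3]] and
   every other letter trivially, and start from the state that, after the
   common prefix, is orthogonal to row 1 of U_x' for the bilinear pairing.
   Then x is rejected surely and y is accepted with probability |D|^2, where
   D is the 2x2 determinant of the second rows of U_x' and U_y'.  Up to a
   power of 5, D is the value at X = i of an integer polynomial; reducing
   modulo the prime (5, X - 3) of Z[i], both rotations become rank-one
   matrices whose images are distinct lines, so the second row of a word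
   matrix only remembers the first occurrence of a or b, and D does not
   vanish mod 5. *)

Lemma sum_ord2 (V : nmodType) (F : 'I_2 -> V) : \sum_(i < 2) F i = F 0 + F 1.
Proof. by rewrite big_ord_recl big_ord1; congr (_ + F _); apply: val_inj. Qed.

Lemma mulmx_ord2E (R : pzSemiRingType) m p (A : 'M[R]_(m, 2)) (B : 'M[R]_(2, p)) i j :
  (A *m B) i j = A i 0 * B 0 j + A i 1 * B 1 j.
Proof. by rewrite mxE sum_ord2. Qed.

Section Unitary.
Variable C : numClosedFieldType.

Lemma adjmxM m n p (A : 'M[C]_(m, n)) (B : 'M[C]_(n, p)) :
  adjmx (A *m B) = adjmx B *m adjmx A.
Proof.
apply/matrixP => i j; rewrite !mxE rmorph_sum; apply: eq_bigr => k _.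
by rewrite !mxE rmorphM mulrC.
Qed.

Lemma adjmx1 n : adjmx (1%:M : 'M[C]_n) = 1%:M.
Proof. by apply/matrixP => i j; rewrite !mxE eq_sym conjC_nat. Qed.

Lemma adjmxK m n (A : 'M[C]_(m, n)) : adjmx (adjmx A) = A.
Proof. by apply/matrixP => i j; rewrite !mxE conjCK. Qed.

Lemma unitary2_1 : unitary2 (1%:M : 'M[C]_2).
Proof. by rewrite /unitary2 adjmx1 mulmx1. Qed.

Lemma unitary2_adj (U : 'M[C]_2) : unitary2 U -> unitary2 (adjmx U).
Proof. by rewrite /unitary2 adjmxK => -[]. Qed.

Lemma unitary2_mul (U V : 'M[C]_2) : unitary2 U -> unitary2 V -> unitary2 (U *m V).
Proof.
move=> [UU' U'U] [VV' V'V]; rewrite /unitary2 adjmxM; split.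
  by rewrite mulmxA -(mulmxA U) VV' mulmx1 UU'.
by rewrite mulmxA -(mulmxA _ _ U) U'U mulmx1 V'V.
Qed.

Lemma unitary2_row_norm (U : 'M[C]_2) i : unitary2 U -> `|U i 0| ^+ 2 + `|U i 1| ^+ 2 = 1.
Proof.
move=> [UU' _]; have := congr1 (fun M : 'M[C]_2 => M i i) UU'.
by rewrite mulmx_ord2E !mxE eqxx !normCK.
Qed.

Lemma unit_vec2E (v : 'cV[C]_2) : unit_vec2 v <-> (adjmx v *m v) 0 0 = 1.
Proof.
rewrite /unit_vec2 mxE (eq_bigr (fun i => (adjmx v) 0 i * v i 0)) //.
by move=> i _; rewrite mxE normCK mulrC.
Qed.

Lemma unit_vec2_mul (U : 'M[C]_2) v : unitary2 U -> unit_vec2 v -> unit_vec2 (U *m v).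
Proof.
move=> [_ U'U]; rewrite !unit_vec2E adjmxM.
by rewrite mulmxA -(mulmxA _ _ U) U'U mulmx1.
Qed.

Definition su2 (a b : C) : 'M[C]_2 :=
  \matrix_(i, j) if i == 0 then (if j == 0 then a else - b^*)
                 else (if j == 0 then b else a^*).

Lemma unitary2_su2 a b : `|a| ^+ 2 + `|b| ^+ 2 = 1 -> unitary2 (su2 a b).
Proof.
rewrite !normCK => ab1; split; apply/matrixP => i j; rewrite mulmx_ord2E !mxE.
all: case: i j => [[|[|//]] ?] [[|[|//]] ?]; rewrite /= ?rmorphN /= ?conjCK.
all: by [rewrite -ab1; ring | ring].
Qed.

End Unitary.

Section WordMatrix.
Variables (Sigma : Type) (n : nat).

Definition word_mx (R : pzRingType) (U : Sigma -> 'M[R]_n) (w : seq Sigma) : 'M[R]_n :=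
  foldr (fun s M => M *m U s) 1%:M w.

Lemma word_mx_cat (R : pzRingType) (U : Sigma -> 'M[R]_n) p q :
  word_mx U (p ++ q) = word_mx U q *m word_mx U p.
Proof.
rewrite /word_mx foldr_cat; elim: p => [|s p IH] /=; first by rewrite mulmx1.
by rewrite IH mulmxA.
Qed.

Lemma map_word_mx (R S : pzRingType) (f : {rmorphism R -> S}) U w :
  map_mx f (word_mx U w) = word_mx (fun s => map_mx f (U s)) w.
Proof.
elim: w => [|s w IH] /=; first exact: map_mx1.
by rewrite map_mxM IH.
Qed.

Lemma word_mx_scale (R : comPzRingType) (c : Sigma -> R) (U V : Sigma -> 'M[R]_n) w :
  (forall s, U s = c s *: V s) -> word_mx U w = (\prod_(s <- w) c s) *: word_mx V w.
Proof.
move=> UE; elim: w => [|s w IH] /=; first by rewrite big_nil scale1r.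
by rewrite IH UE big_cons -scalemxAl -scalemxAr scalerA mulrC.
Qed.

End WordMatrix.

Lemma foldl_word_mx (R : pzRingType) (Sigma : Type) n (U : Sigma -> 'M[R]_n) (v : 'cV[R]_n) w :
  foldl (fun v s => U s *m v) v w = word_mx U w *m v.
Proof. by elim: w v => [|s w IH] v /=; rewrite ?mul1mx // IH mulmxA. Qed.

Lemma final_stateE (C : numClosedFieldType) (Sigma : finType) (M : MCQFA2 C Sigma) w :
  final_state M w = word_mx (trans M) w *m init M.
Proof. exact: foldl_word_mx. Qed.

Definition cross2 (R : comPzRingType) (u v : R * R) : R := u.1 * v.2 - u.2 * v.1.

Definition row1p (R : Type) (A : 'M[R]_2) : R * R := (A 1 0, A 1 1).

Definition row1_cross (R : comPzRingType) (A B : 'M[R]_2) : R := cross2 (row1p A) (row1p B).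

Lemma row1_cross_scale (R : comPzRingType) (c d : R) (A B : 'M[R]_2) :
  row1_cross (c *: A) (d *: B) = c * d * row1_cross A B.
Proof. by rewrite /row1_cross /cross2 /= !mxE; ring. Qed.

Lemma row1_cross_map (R S : comPzRingType) (f : {rmorphism R -> S}) (A B : 'M[R]_2) :
  row1_cross (map_mx f A) (map_mx f B) = f (row1_cross A B).
Proof. by rewrite /row1_cross /cross2 /= !mxE rmorphB !rmorphM. Qed.

Section Separation.
Variables (C : numClosedFieldType) (Sigma : finType) (U : Sigma -> 'M[C]_2).
Hypothesis unitaryU : forall s, unitary2 (U s).

Lemma unitary2_word_mx w : unitary2 (word_mx U w).
Proof. by elim: w => [|s w IH] /=; [exact: unitary2_1 | exact: unitary2_mul]. Qed.

Lemma separating_MCQFA p x y : row1_cross (word_mx U x) (word_mx U y) != 0 ->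
  exists M : MCQFA2 C Sigma, wf_MCQFA2 M /\
    acc_prob M (p ++ x) = 0 /\ acc_prob M (p ++ y) != 0.
Proof.
move=> cross_neq0; set Mx := word_mx U x.
(* [w0] is killed by row 1 of [Mx] under the bilinear pairing, so after the
   common prefix [p] the automaton rejects [x] surely and accepts [y] with
   probability [|row1_cross Mx My|^2]. *)
pose w0 : 'cV[C]_2 := \col_i (if i == 0 then - Mx 1 1 else Mx 1 0).
pose M := {| trans := U; init := adjmx (word_mx U p) *m w0; acc := [set 1] |}.
have accE w : acc_prob M (p ++ w) =
    `|word_mx U w 1 0 * - Mx 1 1 + word_mx U w 1 1 * Mx 1 0| ^+ 2.
  have [Mp_unitary _] := unitary2_word_mx p.
  rewrite /acc_prob big_set1 final_stateE /= word_mx_cat mulmxA -(mulmxA _ _ (adjmx _)).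
  by rewrite Mp_unitary mulmx1 mulmx_ord2E !mxE.
exists M; split; [split => //= | split].
- apply/unit_vec2_mul; first exact/unitary2_adj/unitary2_word_mx.
  by rewrite /unit_vec2 sum_ord2 !mxE /= normrN addrC (unitary2_row_norm 1 (unitary2_word_mx x)).
- rewrite accE -/Mx (_ : _ + _ = 0) ?normr0 ?expr0n //; ring.
- rewrite accE sqrf_eq0 normr_eq0 (_ : _ + _ = row1_cross Mx (word_mx U y)) //.
  by rewrite /row1_cross /cross2 /=; ring.
Qed.

End Separation.

Definition eval_i (C : numClosedFieldType) : {rmorphism {poly int} -> C} :=
  horner_eval 'i \o map_poly intr.

Definition eval_F5 : {rmorphism {poly int} -> 'F_5} := horner_eval 3%:R \o map_poly intr.

Lemma horner_intr_size2 (R : comNzRingType) (z : R) (r : {poly int}) : (size r <= 2)%N ->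
  (map_poly intr r).[z] = (r`_0)%:~R + (r`_1)%:~R * z.
Proof.
move=> size_r; rewrite (horner_coef_wide _ (n := 2)).
  by rewrite sum_ord2 !coef_map /= expr0 mulr1 expr1.
exact: leq_trans (size_poly _ _) size_r.
Qed.

(* Both evaluations kill X^2 + 1, since 3^2 = -1 in F_5; on the remainder
   r0 + r1 X, vanishing at i forces r0^2 + r1^2 = 0, hence r0 = r1 = 0. *)
Lemma eval_i_neq0 (C : numClosedFieldType) (q : {poly int}) :
  eval_F5 q != 0 -> eval_i C q != 0.
Proof.
apply: contraNneq => q_i0.
pose d : {poly int} := 'X^2 + 1%:P.
have monic_d : d \is monic by rewrite monicXnaddC.
have qE := Pdiv.RingMonic.rdivp_eq monic_d q.
set r := Pdiv.CommonRing.rmodp q d in qE.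
have size_r : (size r <= 2)%N.
  by rewrite -ltnS -(size_XnaddC (1 : int) (isT : 0 < 2)%N) Pdiv.CommonRing.ltn_rmodpN0 // monic_neq0.
have d_i0 : eval_i C d = 0.
  by rewrite /= /horner_eval rmorphD /= map_polyXn map_polyC /= !hornerE sqrCi rmorph1 addNr.
have d_F50 : eval_F5 d = 0.
  rewrite /= /horner_eval rmorphD /= map_polyXn map_polyC /= !hornerE rmorph1.
  by apply/eqP; vm_compute.
have r_i0 : (r`_0)%:~R + (r`_1)%:~R * 'i = 0 :> C.
  by rewrite -(horner_intr_size2 _ size_r) -q_i0 [in RHS]qE rmorphD rmorphM d_i0 mulr0 add0r.
have : ((r`_0 ^+ 2 + r`_1 ^+ 2)%:~R : C) = 0.
  move/eqP: r_i0; rewrite addr_eq0 => /eqP r0E.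
  by rewrite rmorphD !rmorphXn /= r0E sqrrN exprMn sqrCi mulrN1 addNr.
move/eqP; rewrite intr_eq0 paddr_eq0 ?sqr_ge0 // !sqrf_eq0 => /andP[/eqP r0 /eqP r1].
rewrite qE rmorphD rmorphM d_F50 mulr0 add0r /= /horner_eval (horner_intr_size2 _ size_r).
by rewrite r0 r1 mul0r addr0.
Qed.

Definition rotA_poly : 'M[{poly int}]_2 :=
  \matrix_(i, j) if i == j then 3%:R else 4%:R * 'X.
Definition rotB_poly : 'M[{poly int}]_2 :=
  \matrix_(i, j) if i == j then 3%:R else if i == 0 then - 4%:R else 4%:R.

Lemma eval_F5X : eval_F5 'X = 3%:R.
Proof. by rewrite /eval_F5 /= /horner_eval map_polyX hornerX. Qed.

Definition vecmx2 (R : pzSemiRingType) (r : R * R) (L : 'M[R]_2) : R * R :=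
  (r.1 * L 0 0 + r.2 * L 1 0, r.1 * L 0 1 + r.2 * L 1 1).

Definition scale2 (R : pzSemiRingType) (k : R) (r : R * R) : R * R := (k * r.1, k * r.2).

Lemma row1p_mulmx (R : pzSemiRingType) (A B : 'M[R]_2) :
  row1p (A *m B) = vecmx2 (row1p A) B.
Proof. by rewrite /row1p !mulmx_ord2E. Qed.

Lemma vecmx2_scale (R : comPzRingType) k r (L : 'M[R]_2) :
  vecmx2 (scale2 k r) L = scale2 k (vecmx2 r L).
Proof. by rewrite /vecmx2 /scale2 /=; congr (_, _); ring. Qed.

Lemma cross2_scale (R : comPzRingType) (k l : R) u v :
  cross2 (scale2 k u) (scale2 l v) = k * l * cross2 u v.
Proof. by rewrite /cross2 /=; ring. Qed.

Definition rA5 : 'F_5 * 'F_5 := (3%:R, 2%:R).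
Definition rB5 : 'F_5 * 'F_5 := (3%:R, 1).

Lemma vecmx2_rotA_F5 r : [\/ r = (0, 1), r = rA5 | r = rB5] ->
  exists2 k : 'F_5, k != 0 & vecmx2 r (map_mx eval_F5 rotA_poly) = scale2 k rA5.
Proof.
move=> r_cases; exists (r.1 + 4%:R * r.2);
  rewrite /vecmx2 ?mxE ?rmorphM ?rmorph_nat ?eval_F5X;
  by case: r_cases => ->; try apply/eqP; vm_compute.
Qed.

Lemma vecmx2_rotB_F5 r : [\/ r = (0, 1), r = rA5 | r = rB5] ->
  exists2 k : 'F_5, k != 0 & vecmx2 r (map_mx eval_F5 rotB_poly) = scale2 k rB5.
Proof.
move=> r_cases; exists (r.1 + 3%:R * r.2);
  rewrite /vecmx2 ?mxE ?rmorphN ?rmorph_nat;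
  by case: r_cases => ->; try apply/eqP; vm_compute.
Qed.

Section Letters.
Variables (Sigma : finType) (a b : Sigma).

Definition letter_poly (s : Sigma) : 'M[{poly int}]_2 :=
  if s == a then rotA_poly else if s == b then rotB_poly else 1%:M.

(* Modulo 5 (with X = 3) both rotations have rank one, with row space
   spanned by rA5 and rB5 respectively; so row 1 of a word matrix points in
   the direction fixed by the first occurrence of a or b in the word. *)
Fixpoint leading_row (w : seq Sigma) : 'F_5 * 'F_5 :=
  if w is s :: w' then (if s == a then rA5 else if s == b then rB5 else leading_row w')
  else (0, 1).

Lemma leading_rowP w : [\/ leading_row w = (0, 1), leading_row w = rA5 | leading_row w = rB5].
Proof.
elim: w => [|s w IH] /=; first exact: Or31.
by case: (s == a); [exact: Or32 | case: (s == b); [exact: Or33 |]].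
Qed.

Lemma leading_row_step s w : exists2 k : 'F_5, k != 0 &
  vecmx2 (leading_row w) (map_mx eval_F5 (letter_poly s)) =
    scale2 k (leading_row (s :: w)).
Proof.
rewrite /= /letter_poly; case: (s == a); last case: (s == b).
- exact: vecmx2_rotA_F5 (leading_rowP w).
- exact: vecmx2_rotB_F5 (leading_rowP w).
- exists 1; first by apply/eqP; vm_compute.
  rewrite (map_mx1 eval_F5) /vecmx2 /scale2 !mxE /= !mul1r !mulr1 !mulr0 addr0 add0r.
  by case: (leading_row w).
Qed.

Lemma row1_word_F5 w : exists2 l : 'F_5, l != 0 &
  row1p (map_mx eval_F5 (word_mx letter_poly w)) = scale2 l (leading_row w).
Proof.
elim: w => [|s w [l l_neq0 IH]].
  exists 1; first by apply/eqP; vm_compute.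
  by rewrite /= map_mx1 /row1p /scale2 !mxE /= !mul1r.
have [k k_neq0 step] := leading_row_step s w.
exists (l * k); first by rewrite mulf_neq0.
by rewrite /= map_mxM row1p_mulmx IH vecmx2_scale step /scale2 /= !mulrA.
Qed.

Lemma row1_cross_word_F5 x y : leading_row x != leading_row y ->
  eval_F5 (row1_cross (word_mx letter_poly x) (word_mx letter_poly y)) != 0.
Proof.
move=> lead_neq; rewrite -row1_cross_map /row1_cross.
have [l l_neq0 ->] := row1_word_F5 x; have [m m_neq0 ->] := row1_word_F5 y.
rewrite cross2_scale !mulf_neq0 //; move: lead_neq.
by case: (leading_rowP x) => ->; case: (leading_rowP y) => ->; vm_compute.
Qed.

End Letters.

Section Rotations.
Variables (C : numClosedFieldType) (Sigma : finType) (a b : Sigma).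

Definition trans_letter (s : Sigma) : 'M[C]_2 :=
  if s == a then su2 (3%:R / 5%:R) (4%:R / 5%:R * 'i)
  else if s == b then su2 (3%:R / 5%:R) (4%:R / 5%:R)
  else 1%:M.

Lemma unitary2_trans_letter s : unitary2 (trans_letter s).
Proof.
have norm_div5 n : `|n%:R / 5%:R| = n%:R / 5%:R :> C by rewrite normf_div !normr_nat.
rewrite /trans_letter; case: (s == a); last case: (s == b).
- by apply: unitary2_su2; rewrite [`|_ * 'i|]normrM normCi mulr1 !norm_div5; field.
- by apply: unitary2_su2; rewrite !norm_div5; field.
- exact: unitary2_1.
Qed.

Lemma eval_iX : eval_i C 'X = 'i.
Proof. by rewrite /= /horner_eval map_polyX hornerX. Qed.

Lemma trans_letterE s : trans_letter s =
  (if (s == a) || (s == b) then 5%:R^-1 else 1) *: map_mx (eval_i C) (letter_poly a b s).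
Proof.
have conj_div5 n : (n%:R / 5%:R : C)^* = n%:R / 5%:R.
  by rewrite rmorphM fmorphV /= !conjC_nat.
rewrite /trans_letter /letter_poly /rotA_poly /rotB_poly; case: (s == a); last case: (s == b).
- apply/matrixP => i j; rewrite !mxE !(fun_if (eval_i C)) (rmorphM (eval_i C)) !rmorph_nat eval_iX.
  case: i j => [[|[|//]] ?] [[|[|//]] ?];
  by rewrite /= ?conj_div5 ?[(_ * 'i)^*]rmorphM /= ?conj_div5 ?conjCi; field.
- apply/matrixP => i j; rewrite !mxE !(fun_if (eval_i C)) rmorphN !rmorph_nat.
  case: i j => [[|[|//]] ?] [[|[|//]] ?];
  by rewrite /= ?rmorphN ?conj_div5; field.
- by rewrite map_mx1 /= scale1r.
Qed.

Lemma row1_cross_trans_letter x y : leading_row a b x != leading_row a b y ->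
  row1_cross (word_mx trans_letter x) (word_mx trans_letter y) != 0.
Proof.
move=> lead_neq; rewrite !(word_mx_scale _ trans_letterE) -!map_word_mx.
rewrite row1_cross_scale row1_cross_map !mulf_neq0 ?eval_i_neq0 ?row1_cross_word_F5 //.
all: rewrite prodf_seq_neq0; apply/allP => s _.
all: by case: ifP; rewrite ?invr_eq0 ?pnatr_eq0 ?oner_neq0.
Qed.

End Rotations.

Lemma common_prefix_split (T : eqType) (x y : seq T) : x <> y ->
  exists p x' y', [/\ x = p ++ x', y = p ++ y' & ohead x' != ohead y'].
Proof.
elim: x y => [|c x IH] [|d y] // x_neq_y.
- by exists [::], [::], (d :: y).
- by exists [::], (c :: x), [::].
- case: (eqVneq c d) x_neq_y => [<- cx_neq_cy | c_neq_d _].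
    have [|p [x' [y' [-> -> head_neq]]]] := IH y; first by move=> xy; apply: cx_neq_cy; rewrite xy.
    by exists (c :: p), x', y'.
  by exists [::], (c :: x), (d :: y); split.
Qed.

Lemma leading_row_separation (Sigma : finType) (x y : seq Sigma) : ohead x != ohead y ->
  exists a b, leading_row a b x != leading_row a b y.
Proof.
case: x => [|c x]; case: y => [|d y] //= head_neq.
- by exists d, d; rewrite /= eqxx.
- by exists c, c; rewrite /= eqxx.
- have d_neq_c : (d == c) = false by rewrite eq_sym; exact: negbTE head_neq.
  by exists c, d; rewrite /= !eqxx d_neq_c; vm_compute.
Qed.

Theorem mainTheorem5 (C : numClosedFieldType) (Sigma : finType) (x y : seq Sigma) :
  x <> y -> exists M : MCQFA2 C Sigma, wf_MCQFA2 M /\ separates_nd M x y.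
Proof.
move=> /common_prefix_split [p [x' [y' [-> -> /leading_row_separation [a [b lead_neq]]]]]].
have [M [wf_M [acc_x acc_y]]] :=
  separating_MCQFA (@unitary2_trans_letter C _ a b) p (row1_cross_trans_letter C lead_neq).
by exists M; split => //; right.
Qed.
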